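(* Let $G=(V,E)$ with weight function $w$ be a Frobenius instance with parameter $k$, with parts $V_1,\dots,V_\ell$ and layer weights $w_1,\dots,w_\ell$. Then $G$ has a closed set $S\subseteq V$ with $w(S)=k$ if and only if $\gcd(w_1,\dots,w_\ell)$ divides $k$.
   Context: For a directed graph $G=(V,E)$, a set $S\subseteq V$ is closed if for every edge $(u,v)\in E$, $u\in S$ implies $v\in S$. $D(v)$ denotes the set of vertices reachable from $v$ by a directed path, including $v$ itself. For a set $S$, $w(S)=\sum_{v\in S}w(v)$. A Frobenius instance with parameter $k\in\mathbb{N}$ is a directed graph $G=(V,E)$ with weight function $w:V\to\mathbb{N}$ and a partition $V=V_1\cup\cdots\cup V_\ell$ satisfying the following four conditions: (P1) there are weights $w_1,\dots,w_\ell$ with $w(v)=w_i$ for all $v\in V_i$ and all $i\in[\ell]$; (P2) every edge $(u,v)\in E$ has $u\in V_i$ and $v\in V_j$ for some $\ell\ge i>j\ge1$; (P3) $|V_i|\ge k$ for all $i\in[\ell]$; (P4) $w(D(v))\le\sqrt{k/2}$ for all $v\in V$. *)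

From mathcomp Require Import all_boot.
Set Implicit Arguments. Unset Strict Implicit. Unset Printing Implicit Defensive.

Definition wsum (V : finType) (w : V -> nat) (S : {set V}) : nat :=
  \sum_(v in S) w v.

Definition closed_set (V : finType) (E : rel V) (S : {set V}) : Prop :=
  forall u v, E u v -> u \in S -> v \in S.

Definition reach (V : finType) (E : rel V) (v : V) : {set V} :=
  [set u | connect E v u].

(* Frobenius instance with parameter k.  Layers V_1..V_l are encoded as
   V_(i+1) = {v | lay v = i} for i : 'I_l, with layer weights wl. *)
Definition frobenius_instance (V : finType) (E : rel V) (w : V -> nat)
    (l : nat) (lay : V -> 'I_l) (wl : 'I_l -> nat) (k : nat) : Prop :=
  (forall v, w v = wl (lay v)) /\
  (forall u v, E u v -> (lay v < lay u)%N) /\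
  (forall i : 'I_l, k <= #|[set v | lay v == i]|) /\
  (* (P4): w(D(v)) <= sqrt(k/2)  <=>  2 * w(D(v))^2 <= k  (w(D(v)) natural) *)
  (forall v, 2 * (wsum w (reach E v)) ^ 2 <= k).

(* Build S from the top layer down.  Let g_j be the gcd of the weights of the
   layers below layer j and B = max_v w(D(v)), so B^2 <= k by (P4).  Arriving at
   layer j with target t, g_(j+1) | t, we already own a closed set C forced by the
   choices made above.  Since multiples of the layer weight a are periodic modulo
   g_j with period g_j / g_(j+1), adding fewer than g_j / g_(j+1) fresh vertices of
   layer j makes the remaining target divisible by g_j; each fresh vertex drags in
   its descendant set, of weight at most B.  The slack invariant
   w(C) + B (B / g_j - 1) <= t telescopes along the layers and holds initially
   because B^2 <= k; layers of size >= k always have enough fresh vertices.  When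
   g_j = 0 everything below is weightless and layer j alone covers the target. *)

From mathcomp Require Import all_boot zify.
Set Implicit Arguments. Unset Strict Implicit. Unset Printing Implicit Defensive.

Lemma mul_modn_solvable G a t :
  0 < G -> gcdn G a %| t -> exists x, x * a = t %[mod G].
Proof.
case: G => // p _ /dvdnP [s ->]; set g := gcdn _ a.
have [u _ /dvdnP [m Bez]] := Bezoutl a (ltn0Sn p).
(* g + u a = 0 (mod G) gives u s (G - 1) a = - g s (G - 1) = g s = t (mod G). *)
exists (u * s * p).
have e : u * s * p * a + s * g * p.+1 = s * p * m * p.+1 + s * g.
  have -> : s * p * m * p.+1 = s * p * (g + u * a) by rewrite Bez mulnA.
  nia.
by rewrite -(modnMDl (s * g)) addnC e modnMDl.
Qed.

Lemma mul_modn_window G a t c :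
  0 < G -> gcdn G a %| t ->
  exists2 y, y < G %/ gcdn G a & (c + y) * a = t %[mod G].
Proof.
move=> G_gt0 /(mul_modn_solvable G_gt0) [x xa]; set q := G %/ gcdn G a.
have q_gt0 : 0 < q by rewrite divn_gt0 ?gcdn_gt0 ?G_gt0 // dvdn_leq ?dvdn_gcdl.
have G_qa : G %| q * a.
  by rewrite /q divn_mulAC ?dvdn_gcdl // -muln_divA ?dvdn_gcdr // dvdn_mulr.
(* y |-> y a (mod G) has period q, so any y = x - c (mod q) works. *)
exists ((x + q.-1 * c) %% q); first by rewrite ltn_mod.
have cy_x : c + (x + q.-1 * c) %% q = x %[mod q].
  by rewrite modnDmr addnCA -mulSn prednK // addnC mulnC modnMDl.
by rewrite -(modn_dvdm _ G_qa) -muln_modl cy_x muln_modl modn_dvdm.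
Qed.

Lemma leq_add_pred_divn_gcd G a B y :
  0 < G -> G <= B -> y < G %/ gcdn G a ->
  y + (B %/ G).-1 <= (B %/ gcdn G a).-1.
Proof.
move=> G_gt0 GB; set g := gcdn G a.
have g_gt0 : 0 < g by rewrite gcdn_gt0 G_gt0.
have BG_gt0 : 0 < B %/ G by rewrite divn_gt0.
have : G %/ g * (B %/ G) <= B %/ g.
  by rewrite leq_divRL // mulnAC divnK ?dvdn_gcdl // mulnC leq_divM.
move: (G %/ g) (B %/ G) (B %/ g) BG_gt0 => q X Y; nia.
Qed.

Section Weights.
Variables (V : finType) (w : V -> nat).

Lemma wsumS (A B : {set V}) : A \subset B -> wsum w A <= wsum w B.
Proof. by move=> AB; rewrite /wsum (big_setID A (A := B)) (setIidPr AB) leq_addr. Qed.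

Lemma wsumU_le (A B : {set V}) : wsum w (A :|: B) <= wsum w A + wsum w B.
Proof.
rewrite /wsum (big_setID A (A := A :|: B)) setUK leq_add2l.
by apply: wsumS; rewrite setDUl setDv set0U subsetDl.
Qed.

Lemma wsum_bigcup_le (I : finType) (P : {pred I}) (F : I -> {set V}) :
  wsum w (\bigcup_(i in P) F i) <= \sum_(i in P) wsum w (F i).
Proof.
elim/big_ind2: _ => [|m A n B Am Bn|//]; first by rewrite /wsum big_set0.
exact: leq_trans (wsumU_le A B) (leq_add Am Bn).
Qed.

Lemma wsum_const (A : {set V}) a : {in A, forall v, w v = a} -> wsum w A = #|A| * a.
Proof. by move=> wA; rewrite /wsum (eq_bigr (fun=> a)) ?sum_nat_const. Qed.

End Weights.

Section ClosedSets.
Variables (V : finType) (E : rel V).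

Definition reach_set (X : {set V}) : {set V} := \bigcup_(v in X) reach E v.

Lemma connect_preserved (P : pred V) :
  (forall x y, E x y -> P x -> P y) -> forall x y, connect E x y -> P x -> P y.
Proof.
move=> EP x y /connectP [p + ->] {y}.
by elim: p x => [|z p IH] x //= /andP [Exz pz] Px; apply: IH pz (EP _ _ Exz Px).
Qed.

Lemma connect_rank (r : V -> nat) u v :
  (forall x y, E x y -> r y < r x) -> connect E v u -> u = v \/ r u < r v.
Proof.
move=> Er vu; suff /orP [/eqP | ] : (u == v) || (r u < r v); [by left | by right |].
apply: (connect_preserved (P := [pred x | (x == v) || (r x < r v)])) vu _; last by rewrite /= eqxx.
move=> x y /Er ryx /orP [/eqP xv | rxv] /=; apply/orP; right; first by rewrite -xv.
exact: ltn_trans rxv.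
Qed.

Lemma closed_set0 : closed_set E set0.
Proof. by move=> u v _; rewrite inE. Qed.

Lemma closed_setU (A B : {set V}) :
  closed_set E A -> closed_set E B -> closed_set E (A :|: B).
Proof.
move=> cA cB u v Euv; rewrite !inE.
by case/orP => [/(cA _ _ Euv) | /(cB _ _ Euv)] ->; rewrite ?orbT.
Qed.

Lemma closed_setI (A B : {set V}) :
  closed_set E A -> closed_set E B -> closed_set E (A :&: B).
Proof.
by move=> cA cB u v Euv; rewrite !inE => /andP [/(cA _ _ Euv) -> /(cB _ _ Euv)].
Qed.

Lemma closed_reach_set (X : {set V}) : closed_set E (reach_set X).
Proof.
move=> u v Euv /bigcupP [x Xx]; rewrite inE => xu; apply/bigcupP; exists x => //.
by rewrite inE (connect_trans xu (connect1 Euv)).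
Qed.

Lemma reach_set_sub (X : {set V}) : X \subset reach_set X.
Proof. by apply/subsetP => x Xx; apply/bigcupP; exists x; rewrite ?inE. Qed.

Lemma reach_set_sub_closed (S X : {set V}) :
  closed_set E S -> X \subset S -> reach_set X \subset S.
Proof.
move=> cS /subsetP XS; apply/bigcupsP => x /XS Sx; apply/subsetP => u.
by rewrite inE => /(connect_preserved cS); apply.
Qed.

End ClosedSets.

Section LayeredConstruction.
Variables (V : finType) (E : rel V) (w : V -> nat).
Variables (l : nat) (lay : V -> 'I_l) (wl : 'I_l -> nat) (k B : nat).
Hypothesis w_lay : forall v, w v = wl (lay v).
Hypothesis E_lay : forall u v, E u v -> lay v < lay u.
Hypothesis layer_large : forall i : 'I_l, k <= #|[set v | lay v == i]|.
Hypothesis wsum_reach_le : forall v, wsum w (reach E v) <= B.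

Definition below j := [set v | lay v < j].
Definition layer j := [set v | lay v == j :> nat].
Definition gcd_below j := \big[gcdn/0]_(v in below j) w v.
(* Bounds the number of non-forced vertices the layers below j may still need,
   each costing at most B; it is 0 when gcd_below j = 0, as B %/ 0 = 0. *)
Definition budget j := (B %/ gcd_below j).-1.

Lemma closed_below j : closed_set E (below j).
Proof. by move=> u v /E_lay vu; rewrite !inE; apply: ltn_trans. Qed.

Lemma w_le_B v : w v <= B.
Proof.
apply: leq_trans (wsum_reach_le v).
by rewrite /wsum (bigD1 v) ?inE ?connect0 //= leq_addr.
Qed.

Lemma layer_card j (jl : j < l) : k <= #|layer j|.
Proof.
apply: leq_trans (layer_large (Ordinal jl)) _.
by apply/eq_leq/eq_card => v; rewrite !inE.
Qed.

Lemma below_layer0 j (S : {set V}) : S \subset below j -> S :&: layer j = set0.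
Proof.
move=> /subsetP Sb; apply/eqP; rewrite -subset0; apply/subsetP => v.
by rewrite inE => /andP [/Sb]; rewrite !inE => /ltn_eqF ->.
Qed.

Lemma layer_weight_eq j u v : u \in layer j -> v \in layer j -> w u = w v.
Proof. by rewrite !inE !w_lay => /eqP uj /eqP vj; congr wl; apply: val_inj; rewrite /= uj vj. Qed.

Lemma wsum_below_succ j a (X : {set V}) :
  {in layer j, forall v, w v = a} -> X \subset below j.+1 ->
  wsum w X = wsum w (X :&: below j) + #|X :&: layer j| * a.
Proof.
move=> wa /subsetP Xb; rewrite -(wsum_const (w := w) (A := X :&: layer j)); last first.
  by move=> v; rewrite inE => /andP [_ /wa].
rewrite /wsum (big_setID (below j)); congr addn; apply: eq_bigl => v; rewrite !inE.
case Xv: (v \in X); rewrite ?andbF //= andbT.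
by move: (Xb v Xv); rewrite inE ltnS; case: ltngtP.
Qed.

Lemma gcd_below0 : gcd_below 0 = 0.
Proof. by rewrite /gcd_below big_pred0 // => v; rewrite inE. Qed.

Lemma gcd_below_dvd j v : v \in below j -> gcd_below j %| w v.
Proof. by move=> vb; apply: biggcdn_inf vb _. Qed.

Lemma gcd_below_le j : gcd_below j <= B.
Proof.
apply: (big_ind (fun x => x <= B)) => // [x y xB yB | v _]; last exact: w_le_B.
case: (posnP x) => [-> | x_gt0]; first by rewrite gcd0n.
exact: leq_trans (dvdn_leq x_gt0 (dvdn_gcdl x y)) xB.
Qed.

Lemma wsum_gcd_below0 j (X : {set V}) :
  gcd_below j = 0 -> X \subset below j -> wsum w X = 0.
Proof.
move=> G0 /subsetP Xb; apply: big1 => v /Xb /gcd_below_dvd.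
by rewrite G0 dvd0n => /eqP.
Qed.

Lemma gcd_below_succ j v0 :
  v0 \in layer j -> gcd_below j.+1 = gcdn (gcd_below j) (w v0).
Proof.
move=> v0j; have below_succ v : v \in below j -> v \in below j.+1.
  by rewrite !inE => /ltnW.
apply/esym/gcdn_def.
- by apply/dvdn_biggcdP => v /below_succ /gcd_below_dvd.
- by apply: gcd_below_dvd; move: v0j; rewrite !inE => /eqP ->.
move=> d dG dw; apply/dvdn_biggcdP => v; rewrite inE ltnS leq_eqVlt => /orP [vj | vb].
  by rewrite (@layer_weight_eq j v v0) // inE.
by apply: dvdn_trans dG (gcd_below_dvd _); rewrite inE.
Qed.

Lemma reach_set_layer j (Y : {set V}) :
  Y \subset layer j -> reach_set E Y :&: layer j = Y.
Proof.
move=> /subsetP Yj; apply/setP => u; rewrite inE; apply/andP/idP => [[] | Yu].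
  case/bigcupP => v Yv; rewrite inE => /(connect_rank (r := fun x => val (lay x)) E_lay).
  case=> [-> // | lt_uv]; rewrite inE => /eqP uj.
  by move: (Yj v Yv) lt_uv; rewrite inE /= uj => /eqP ->; rewrite ltnn.
by split; [apply: (subsetP (reach_set_sub E Y)) | apply: Yj].
Qed.

Lemma wsum_reach_set_le (X : {set V}) : wsum w (reach_set E X) <= #|X| * B.
Proof.
rewrite -sum_nat_const; apply: leq_trans (wsum_bigcup_le _ _ _) _.
exact: leq_sum.
Qed.

Lemma extend_in_layer j (C : {set V}) n :
  closed_set E C -> C \subset below j.+1 -> #|C :&: layer j| <= n <= #|layer j| ->
  exists C' : {set V}, [/\ closed_set E C', C \subset C', C' \subset below j.+1,
    #|C' :&: layer j| = n & wsum w C' <= wsum w C + (n - #|C :&: layer j|) * B].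
Proof.
move=> cC Cb /andP [c0n nL]; set c0 := #|C :&: layer j|.
have /card_geqP [s [s_uniq s_size sD]] : n - c0 <= #|layer j :\: C|.
  by rewrite cardsD setIC leq_sub2r.
set Y := [set v in s].
have cardY : #|Y| = n - c0 by rewrite cardsE (card_uniqP s_uniq).
have Yj : Y \subset layer j by apply/subsetP => v; rewrite inE => /sD /setDP [].
exists (C :|: reach_set E Y); split.
- by apply: closed_setU cC _; apply: closed_reach_set.
- exact: subsetUl.
- rewrite subUset Cb; apply: reach_set_sub_closed; first exact: closed_below.
  by apply: subset_trans Yj _; apply/subsetP => v; rewrite !inE => /eqP ->.
- rewrite setIUl reach_set_layer // cardsU cardY -/c0.
  suff -> : C :&: layer j :&: Y = set0 by rewrite cards0 subn0 subnKC.
  apply/eqP; rewrite -subset0; apply/subsetP => v.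
  by rewrite !inE => /andP [/andP [Cv _] /sD]; rewrite !inE Cv.
- by rewrite -cardY; apply: leq_trans (wsumU_le _ _ _) _; rewrite leq_add2l wsum_reach_set_le.
Qed.

Definition extendable j := forall (C : {set V}) t,
  closed_set E C -> C \subset below j -> gcd_below j %| t -> t <= k ->
  wsum w C + B * budget j <= t ->
  exists S : {set V}, [/\ closed_set E S, C \subset S, S \subset below j & wsum w S = t].

Lemma extendable0 : extendable 0.
Proof.
move=> C t cC Cb; rewrite gcd_below0 dvd0n => /eqP -> _.
by rewrite leqn0 addn_eq0 => /andP [/eqP wC _]; exists C; split.
Qed.

Lemma layer_step j a (C : {set V}) t n :
  extendable j -> {in layer j, forall v, w v = a} ->
  closed_set E C -> C \subset below j.+1 ->
  #|C :&: layer j| <= n <= #|layer j| -> gcd_below j %| t - n * a -> t <= k ->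
  wsum w C + (n - #|C :&: layer j|) * B + B * budget j <= t ->
  exists S : {set V}, [/\ closed_set E S, C \subset S, S \subset below j.+1 & wsum w S = t].
Proof.
move=> IH wa cC Cb cn Gt tk slack.
have [C' [cC' CC' C'b C'n wC']] := extend_in_layer cC Cb cn.
have wC'_split := wsum_below_succ wa C'b; rewrite C'n in wC'_split.
have na_le_t : n * a <= t by lia.
have [|S' [cS' C'S' S'b wS']] := IH (C' :&: below j) (t - n * a)
  (closed_setI cC' (@closed_below j)) (subsetIr _ _) Gt (leq_trans (leq_subr _ _) tk).
  by lia.
have S'b_succ : S' \subset below j.+1.
  by apply: subset_trans S'b _; apply/subsetP => v; rewrite !inE => /ltnW.
exists (S' :|: C'); split.
- exact: closed_setU cS' cC'.
- exact: subset_trans CC' (subsetUr _ _).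
- by rewrite subUset S'b_succ.
rewrite (wsum_below_succ wa) ?subUset ?S'b_succ //.
rewrite !setIUl (setIidPl S'b) (setUidPl C'S') below_layer0 // set0U C'n.
by rewrite wS' subnK.
Qed.

Lemma layer_fill j a (C : {set V}) n :
  gcd_below j = 0 -> {in layer j, forall v, w v = a} ->
  closed_set E C -> C \subset below j.+1 -> #|C :&: layer j| <= n <= #|layer j| ->
  exists S : {set V}, [/\ closed_set E S, C \subset S, S \subset below j.+1 & wsum w S = n * a].
Proof.
move=> G0 wa cC Cb cn; have [S [cS CS Sb Sn _]] := extend_in_layer cC Cb cn.
exists S; split=> //.
by rewrite (wsum_below_succ wa Sb) (wsum_gcd_below0 G0 (subsetIr _ _)) Sn.
Qed.

Lemma layer_count j a (C : {set V}) t :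
  0 < gcd_below j -> {in layer j, forall v, w v = a} -> C \subset below j.+1 -> a <= B ->
  gcdn (gcd_below j) a %| t -> t <= k -> k <= #|layer j| ->
  wsum w C + B * (B %/ gcdn (gcd_below j) a).-1 <= t ->
  exists n, [/\ #|C :&: layer j| <= n <= #|layer j|, gcd_below j %| t - n * a &
    wsum w C + (n - #|C :&: layer j|) * B + B * budget j <= t].
Proof.
move=> G_gt0 wa Cb aB Gt tk kL slack; set c0 := #|C :&: layer j|.
have [y y_lt y_mod] := mul_modn_window c0 G_gt0 Gt.
have y_budget := leq_add_pred_divn_gcd G_gt0 (gcd_below_le j) y_lt.
rewrite -/(budget j) in y_budget.
have c0a : c0 * a <= wsum w C by rewrite (wsum_below_succ wa Cb) leq_addl.
move: slack y_budget; move: (_.-1) (budget j) => bS b slack y_budget.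
have na_le_t : (c0 + y) * a <= t by nia.
exists (c0 + y); split; last by rewrite addKn; nia.
  rewrite leq_addr /=; have [a0 | a_gt0] := posnP a.
    move: y_lt; rewrite a0 gcdn0 divnn G_gt0 ltnS leqn0 => /eqP ->.
    by rewrite addn0 subset_leq_card ?subsetIr.
  by apply: leq_trans kL; apply: leq_trans tk; apply: leq_trans na_le_t; apply: leq_pmulr.
by rewrite -eqn_mod_dvd // y_mod.
Qed.

Lemma extendableS j : j < l -> extendable j -> extendable j.+1.
Proof.
move=> jl IH C t cC Cb Gt tk slack.
have [t0 | t_gt0] := posnP t.
  by move: slack; rewrite t0 leqn0 addn_eq0 => /andP [/eqP wC _]; exists C; split.
have kL := layer_card jl.
have /card_gt0P [v0 v0j] : 0 < #|layer j| by apply: leq_trans kL; apply: leq_trans tk.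
set a := w v0; have wa : {in layer j, forall v, w v = a} by move=> v /layer_weight_eq; apply.
rewrite /budget (gcd_below_succ v0j) -/a in Gt slack.
have [G0 | G_gt0] := posnP (gcd_below j); last first.
  have [n [cn Gn slack']] := layer_count G_gt0 wa Cb (w_le_B v0) Gt tk kL slack.
  exact: layer_step IH wa cC Cb cn Gn tk slack'.
rewrite G0 gcd0n in Gt.
have a_gt0 : 0 < a by rewrite lt0n; apply: contraTneq Gt => ->; rewrite dvd0n -lt0n.
have c0a : #|C :&: layer j| * a <= t.
  apply: leq_trans (leq_trans (leq_addr _ _) slack).
  by rewrite (wsum_below_succ wa Cb) leq_addl.
have [|S [cS CS Sb wS]] := layer_fill (n := t %/ a) G0 wa cC Cb.
  by rewrite leq_divRL // c0a (leq_trans (leq_div _ _) (leq_trans tk kL)).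
by exists S; rewrite wS divnK.
Qed.

Lemma budget_le j : budget j <= B.
Proof. exact: leq_trans (leq_pred _) (leq_div _ _). Qed.

Lemma gcd_below_dvd_gcd_layers : 0 < k -> gcd_below l %| \big[gcdn/0]_(i < l) wl i.
Proof.
move=> k_gt0; apply/dvdn_biggcdP => i _.
have /card_gt0P [v] := leq_trans k_gt0 (layer_large i).
by rewrite inE => /eqP <-; rewrite -w_lay; apply: gcd_below_dvd; rewrite inE.
Qed.

Lemma extendable_layers : extendable l.
Proof.
suff: forall j, j <= l -> extendable j by apply.
by elim=> [|j IH jl]; [move=> _; apply: extendable0 | apply: extendableS jl (IH (ltnW jl))].
Qed.

End LayeredConstruction.

Theorem mainTheorem2 (V : finType) (E : rel V) (w : V -> nat)
    (l : nat) (lay : V -> 'I_l) (wl : 'I_l -> nat) (k : nat) :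
  frobenius_instance E w lay wl k ->
  (exists S : {set V}, closed_set E S /\ wsum w S = k) <->
  (\big[gcdn/0]_(i < l) wl i %| k).
Proof.
move=> [w_lay [E_lay [layer_large reach_small]]]; split.
  case=> S [_ <-]; apply: dvdn_sum => v _; rewrite w_lay.
  by apply: (biggcdn_inf (lay v)).
move=> gcd_k; set B := \max_v wsum w (reach E v).
have reach_le_B v : wsum w (reach E v) <= B by apply: leq_bigmax.
have B2_le_k : B * B <= k.
  apply: (big_ind (fun m => m * m <= k)) => // [x y xk yk | v _].
    by rewrite /maxn; case: ifP.
  by rewrite mulnn; apply: leq_trans (reach_small v); rewrite mul2n -addnn leq_addr.
have below_k : gcd_below w lay l %| k.
  have [-> // | k_gt0] := posnP k.
  exact: dvdn_trans (gcd_below_dvd_gcd_layers w_lay layer_large k_gt0) gcd_k.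
have [|S [cS _ _ wS]] := extendable_layers w_lay E_lay layer_large reach_le_B
  (@closed_set0 _ E) (sub0set _) below_k (leqnn k).
  by rewrite /wsum big_set0 add0n (leq_trans _ B2_le_k) ?leq_mul2l ?budget_le ?orbT.
by exists S.
Qed.
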